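(* Let $\lambda\in\Lambda$. If $W(\lambda)\neq\emptyset$, then $W(\lambda)=\widehat W$. Indeed, if $w_N\in W(\lambda)$ then $\underline L^*=\|w_N-w_0\|^2$ and $\widehat W=\{w\in W:H(w-w_N)=0\}=W(\lambda)$, where $H=2(I-\lambda\Delta)$. In particular, if $\lambda\in\Lambda^\circ$ and $w_N\in W(\lambda)$, then $w_N$ is the unique solution of the problem.
   Context: Regular dimension-reduced canonical form: let $q\ge1$, $\gamma_1>\dots>\gamma_q$ nonzero reals with $\gamma_1>0$, $\Gamma^*=\operatorname{diag}(\gamma_1,\dots,\gamma_q)$, $\delta=(\delta_1,\dots,\delta_q)^\top$ with all $\delta_i\ge0$, $k^*\in\mathbb{R}$, $\varepsilon\ge0$. Either ($m_0=0$) $\varepsilon=0$, the variable is $w=z\in\mathbb{R}^q$, $w_0=\delta$, $\Delta=\Gamma^*$, $d=0_q$; or ($m_0>0$) $\varepsilon>0$, $w=(y,z^\top)^\top\in\mathbb{R}^{q+1}$, $w_0=(0,\delta^\top)^\top$, $\Delta=\operatorname{diag}(0,\Gamma^* )$, $d=\varepsilon e_1$. The problem is to minimise $L^*(w)=\|w-w_0\|^2$ over $W=\{w:Q^*(w)=0\}$, $Q^*(w)=w^\top\Delta w+2d^\top w-k^*$, where $W\neq\emptyset$; $\underline L^*=\inf_WL^*$, $\widehat W=\{w\in W:L^*(w)=\underline L^*\}$. Normal equations: $(I-\lambda\Delta)w=w_0+\lambda d$. Admissible region: $\Lambda=(-\infty,\gamma_1^{-1}]$ if $\gamma_q>0$,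 $\Lambda=[\gamma_q^{-1},\gamma_1^{-1}]$ if $\gamma_q<0$; $\Lambda^\circ$ its interior. For $\lambda\in\Lambda$, $W_N(\lambda)$ is the set of solutions $w$ of the normal equations and $W(\lambda)=W\cap W_N(\lambda)$. *)

(* R is an arbitrary real field (the statement is purely
   algebraic/order-theoretic; no limits are needed). *)
From HB Require Import structures.
From mathcomp Require Import all_boot all_order all_algebra.
Set Implicit Arguments. Unset Strict Implicit. Unset Printing Implicit Defensive.
Import Order.TTheory GRing.Theory Num.Theory.
Local Open Scope ring_scope.

(* Indexing convention: gamma, delta : nat -> R are used at indices 1..q
   (gamma 1 = gamma_1, ..., gamma q = gamma_q), as in the paper.
   The case flag b : bool encodes m0 > 0 (b = true) vs m0 = 0 (b = false);
   the variable w lives in R^(b + q): for b = false it is z in R^q, for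
   b = true it is (y, z^T)^T in R^(q+1). *)

Section Canonical.
Variables (R : realFieldType) (q : nat) (b : bool)
  (gamma delta : nat -> R) (kstar eps : R).

Definition dim := (b + q)%N.

Definition GammaStar : 'M[R]_q := diag_mx (\row_(i < q) gamma i.+1).

(* Delta = Gamma^* (m0 = 0) or diag(0, Gamma^* ) (m0 > 0) *)
Definition Delta : 'M[R]_(b + q) := block_mx 0 0 0 GammaStar.

(* w0 = delta (m0 = 0) or (0, delta^T)^T (m0 > 0) *)
Definition w0 : 'cV[R]_(b + q) := col_mx 0 (\col_(i < q) delta i.+1).

(* d = 0_q (m0 = 0) or eps e_1 (m0 > 0) *)
Definition dvec : 'cV[R]_(b + q) := col_mx (const_mx eps) 0.

Definition sqnorm n (v : 'cV[R]_n) : R := (v^T *m v) 0 0.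

Definition Lstar (w : 'cV[R]_(b + q)) : R := sqnorm (w - w0).

Definition Qstar (w : 'cV[R]_(b + q)) : R :=
  (w^T *m Delta *m w) 0 0 + 2 * (dvec^T *m w) 0 0 - kstar.

Definition inW (w : 'cV[R]_(b + q)) : Prop := Qstar w = 0.

Definition is_inf_value (m : R) : Prop :=
  (forall w, inW w -> m <= Lstar w) /\
  (forall m', (forall w, inW w -> m' <= Lstar w) -> m' <= m).

Definition inWhat (w : 'cV[R]_(b + q)) : Prop :=
  inW w /\ forall v, inW v -> Lstar w <= Lstar v.

Definition inWN (lam : R) (w : 'cV[R]_(b + q)) : Prop :=
  (1%:M - lam *: Delta) *m w = w0 + lam *: dvec.

Definition inWlam (lam : R) (w : 'cV[R]_(b + q)) : Prop :=
  inW w /\ inWN lam w.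

Definition Hmat (lam : R) : 'M[R]_(b + q) := 2 *: (1%:M - lam *: Delta).

Definition inLambda (lam : R) : Prop :=
  if 0 < gamma q then lam <= (gamma 1)^-1
  else ((gamma q)^-1 <= lam) && (lam <= (gamma 1)^-1).

Definition inLambda_int (lam : R) : Prop :=
  if 0 < gamma q then lam < (gamma 1)^-1
  else ((gamma q)^-1 < lam) && (lam < (gamma 1)^-1).

End Canonical.

Arguments Delta {R} q b gamma.
Arguments w0 {R} q b delta.
Arguments dvec {R} q b eps.
Arguments Lstar {R} q b delta w.
Arguments Qstar {R} q b gamma kstar eps w.
Arguments inW {R} q b gamma kstar eps w.
Arguments is_inf_value {R} q b gamma delta kstar eps m.
Arguments inWhat {R} q b gamma delta kstar eps w.
Arguments inWN {R} q b gamma delta eps lam w.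
Arguments inWlam {R} q b gamma delta kstar eps lam w.

(** For [lam] in the admissible region the weights [1 - lam * gamma_i] of
    [I - lam Delta] are nonnegative.  If [wN] solves the normal equations,
    completing the square gives, for every [w],
    [L*(w) = L*(wN) + (w - wN)^T (I - lam Delta) (w - wN) + lam (Q*(w) - Q*(wN))],
    so on the feasible set [L*(w) - L*(wN)] is a nonnegative weighted sum of
    squares.  Hence [wN] is a minimiser, and [w] is another one exactly when
    [(I - lam Delta)(w - wN) = 0], i.e. when [w] solves the normal equations
    too.  In the interior of the region all weights are positive, which
    forces [w = wN]. *)

From HB Require Import structures.
From mathcomp Require Import all_boot all_order all_algebra.
From mathcomp Require Import ring lra.
Set Implicit Arguments. Unset Strict Implicit. Unset Printing Implicit Defensive.
Import Order.TTheory GRing.Theory Num.Theory.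
Local Open Scope ring_scope.

Lemma sqnormE (R : realFieldType) n (v : 'cV[R]_n) :
  sqnorm v = \sum_i v i 0 ^+ 2.
Proof. by rewrite /sqnorm mxE; apply: eq_bigr => i _; rewrite mxE expr2. Qed.

Section DiagonalQuadratic.
Variables (R : realFieldType) (n : nat) (g : 'rV[R]_n) (lam : R).

Local Notation A := (1%:M - lam *: diag_mx g).
Local Notation c i := (1 - lam * g 0 i).

Lemma mul_shifted_diagE (v : 'cV[R]_n) i : (A *m v) i 0 = c i * v i 0.
Proof. by rewrite mulmxBl mul1mx -scalemxAl mul_diag_mx !mxE mulrBl mul1r mulrA. Qed.

Lemma mul_shifted_diag_eq0 (v : 'cV[R]_n) :
  A *m v = 0 <-> forall i, c i * v i 0 = 0.
Proof.
split=> [/matrixP Av0 i | Av0]; first by rewrite -mul_shifted_diagE Av0 mxE.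
by apply/matrixP=> i j; rewrite ord1 mul_shifted_diagE Av0 mxE.
Qed.

Lemma mul_shifted_diag_inj (v : 'cV[R]_n) :
  (forall i, c i != 0) -> A *m v = 0 -> v = 0.
Proof.
move=> c_neq0 /mul_shifted_diag_eq0 Av0; apply/matrixP=> i j; rewrite ord1 mxE.
by apply/eqP; move/eqP: (Av0 i); rewrite mulf_eq0 (negPf (c_neq0 i)).
Qed.

Lemma weighted_sqr_sum_eq0 (v : 'cV[R]_n) : (forall i, 0 <= c i) ->
  \sum_i c i * v i 0 ^+ 2 = 0 <-> A *m v = 0.
Proof.
move=> c_ge0; rewrite mul_shifted_diag_eq0; split=> [sum0 i | Av0].
  have /psumr_eq0P/(_ sum0 i isT)/eqP : forall i, true -> 0 <= c i * v i 0 ^+ 2.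
    by move=> k _; rewrite mulr_ge0 ?sqr_ge0.
  by rewrite mulf_eq0 sqrf_eq0 => /orP[]/eqP->; rewrite ?mul0r ?mulr0.
by rewrite big1 // => i _; rewrite expr2 mulrA Av0 mul0r.
Qed.

Variables (w0 d : 'cV[R]_n).

Let quad (w : 'cV[R]_n) := (w^T *m diag_mx g *m w) 0 0 + 2 * (d^T *m w) 0 0.

Lemma quadE w : quad w = \sum_i (g 0 i * w i 0 ^+ 2 + 2 * d i 0 * w i 0).
Proof.
rewrite /quad mul_mx_diag !mxE big_split /= mulr_sumr.
by congr (_ + _); apply: eq_bigr => i _; rewrite !mxE; ring.
Qed.

Lemma sqnorm_complete_square (wN w : 'cV[R]_n) : A *m wN = w0 + lam *: d ->
  sqnorm (w - w0) =
  sqnorm (wN - w0) + \sum_i c i * (w - wN) i 0 ^+ 2 + lam * (quad w - quad wN).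
Proof.
move=> /matrixP normal; rewrite !sqnormE !quadE -sumrB mulr_sumr -!big_split /=.
apply: eq_bigr => i _; move: (normal i 0); rewrite mul_shifted_diagE !mxE => normal_i.
have -> : w0 i 0 = c i * wN i 0 - lam * d i 0 by rewrite normal_i; ring.
ring.
Qed.

End DiagonalQuadratic.

Section AdmissibleRegion.
Variables (R : realFieldType) (g1 gq lam : R).

Lemma mul_le1_between x : gq <= x <= g1 ->
  lam * gq <= 1 -> lam * g1 <= 1 -> lam * x <= 1.
Proof. by move=> /andP[? ?] ? ?; case: (lerP 0 lam) => ?; nra. Qed.

Lemma mul_lt1_between x : gq <= x <= g1 ->
  lam * gq < 1 -> lam * g1 < 1 -> lam * x < 1.
Proof. by move=> /andP[? ?] ? ?; case: (lerP 0 lam) => ?; nra. Qed.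

Hypotheses (g1_gt0 : 0 < g1) (gq_neq0 : gq != 0) (gq_le_g1 : gq <= g1).

Lemma admissible_endpoints_le :
  (if 0 < gq then lam <= g1^-1 else (gq^-1 <= lam) && (lam <= g1^-1)) ->
  lam * gq <= 1 /\ lam * g1 <= 1.
Proof.
case: ifP => [/idP gq_gt0 lam_le | gq_le0 /andP[lam_ge lam_le]];
  have lam_g1 : lam * g1 <= 1 by rewrite -ler_pdivlMr // div1r.
  split=> //; case: (lerP 0 lam) => ?; last by nra.
  exact: le_trans (ler_wpM2l _ gq_le_g1) lam_g1.
have gq_lt0 : gq < 0 by rewrite lt_neqAle gq_neq0 leNgt gq_le0.
by split=> //; rewrite -ler_ndivrMr // div1r.
Qed.

Lemma admissible_endpoints_lt :
  (if 0 < gq then lam < g1^-1 else (gq^-1 < lam) && (lam < g1^-1)) ->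
  lam * gq < 1 /\ lam * g1 < 1.
Proof.
case: ifP => [/idP gq_gt0 lam_lt | gq_le0 /andP[lam_gt lam_lt]];
  have lam_g1 : lam * g1 < 1 by rewrite -ltr_pdivlMr // div1r.
  split=> //; case: (lerP 0 lam) => ?; last by nra.
  exact: le_lt_trans (ler_wpM2l _ gq_le_g1) lam_g1.
have gq_lt0 : gq < 0 by rewrite lt_neqAle gq_neq0 leNgt gq_le0.
by split=> //; rewrite -ltr_ndivrMr // div1r.
Qed.
End AdmissibleRegion.

Section CanonicalForm.
Variables (R : realFieldType) (q : nat) (b : bool) (gamma delta : nat -> R)
  (kstar eps lam : R).

Definition Delta_diag : 'rV[R]_(b + q) :=
  row_mx (0 : 'rV[R]_b) (\row_(i < q) gamma i.+1).

Lemma DeltaE : Delta q b gamma = diag_mx Delta_diag.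
Proof.
rewrite /Delta /GammaStar /Delta_diag diag_mx_row; congr block_mx.
by apply/matrixP=> i j; rewrite !mxE mul0rn.
Qed.

Lemma Delta_diag_cases (i : 'I_(b + q)) :
  Delta_diag 0 i = 0 \/ exists j : 'I_q, Delta_diag 0 i = gamma j.+1.
Proof.
rewrite /Delta_diag -(splitK i); case: (split i) => j /=.
  by left; rewrite row_mxEl mxE.
by right; exists j; rewrite row_mxEr mxE.
Qed.

Hypotheses
  (gamma_decr : forall i j : nat,
     (1 <= i)%N -> (i < j)%N -> (j <= q)%N -> gamma j < gamma i)
  (gamma_neq0 : forall i : nat, (1 <= i)%N -> (i <= q)%N -> gamma i != 0)
  (gamma1_gt0 : 0 < gamma 1).

Lemma gamma_bounds (j : 'I_q) : gamma q <= gamma j.+1 <= gamma 1.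
Proof.
have jq : (j.+1 <= q)%N := ltn_ord j.
apply/andP; split.
  by case: (ltngtP j.+1 q) jq => // [lt_jq | ->] _; [apply/ltW/gamma_decr | ].
by case: j jq => [[|j]] //= _ jq; apply/ltW/gamma_decr.
Qed.

Lemma gamma_q_le_1 (j : 'I_q) : gamma q <= gamma 1.
Proof. by have /andP[lb ub] := gamma_bounds j; exact: le_trans ub. Qed.

Lemma gamma_q_neq0 (j : 'I_q) : gamma q != 0.
Proof. by apply: gamma_neq0; first exact: leq_ltn_trans (leq0n j) (ltn_ord j). Qed.

Lemma Delta_weight_ge0 : inLambda q gamma lam ->
  forall i, 0 <= 1 - lam * Delta_diag 0 i.
Proof.
move=> hlam i; have [-> | [j ->]] := Delta_diag_cases i.
  by rewrite mulr0 subr0.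
have [lam_gq lam_g1] :=
  admissible_endpoints_le gamma1_gt0 (gamma_q_neq0 j) (gamma_q_le_1 j) hlam.
by rewrite subr_ge0 (mul_le1_between (gamma_bounds j)).
Qed.

Lemma Delta_weight_gt0 : inLambda_int q gamma lam ->
  forall i, 0 < 1 - lam * Delta_diag 0 i.
Proof.
move=> hlam i; have [-> | [j ->]] := Delta_diag_cases i.
  by rewrite mulr0 subr0.
have [lam_gq lam_g1] :=
  admissible_endpoints_lt gamma1_gt0 (gamma_q_neq0 j) (gamma_q_le_1 j) hlam.
by rewrite subr_gt0 (mul_lt1_between (gamma_bounds j)).
Qed.

Hypothesis hlam : inLambda q gamma lam.

Local Notation A := (1%:M - lam *: Delta q b gamma).
Local Notation feasible := (inW q b gamma kstar eps).
Local Notation minimiser := (inWhat q b gamma delta kstar eps).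
Local Notation L := (Lstar q b delta).

Variable wN : 'cV[R]_(b + q).
Hypothesis wN_normal : inWlam q b gamma delta kstar eps lam wN.

Lemma Lstar_feasibleE w : feasible w ->
  L w = L wN + \sum_i (1 - lam * Delta_diag 0 i) * (w - wN) i 0 ^+ 2.
Proof.
case: wN_normal; rewrite /inW /Qstar /inWN /Lstar DeltaE.
move=> /eqP; rewrite subr_eq0 => /eqP wN_feas /sqnorm_complete_square ->.
move=> /eqP; rewrite subr_eq0 => /eqP->.
by rewrite wN_feas subrr mulr0 addr0.
Qed.

Lemma minimiserE w : minimiser w <-> feasible w /\ A *m (w - wN) = 0.
Proof.
have weight_ge0 := Delta_weight_ge0 hlam.
rewrite DeltaE; split=> [[w_feas w_min] | [w_feas Aw0]].
  split=> //; apply/(weighted_sqr_sum_eq0 _ weight_ge0); apply/le_anti.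
  rewrite sumr_ge0 ?andbT => [|i _]; last by rewrite mulr_ge0 ?sqr_ge0.
  by rewrite -(lerD2l (L wN)) addr0 -Lstar_feasibleE // w_min //; case: wN_normal.
split=> // v v_feas; rewrite Lstar_feasibleE // (Lstar_feasibleE v_feas).
move/(weighted_sqr_sum_eq0 _ weight_ge0): Aw0 => ->.
by rewrite addr0 lerDl sumr_ge0 // => i _; rewrite mulr_ge0 ?sqr_ge0.
Qed.

Lemma minimiser_wN : minimiser wN.
Proof. by apply/minimiserE; case: wN_normal => wN_feas _; rewrite subrr mulmx0. Qed.

Lemma normal_eqE w : inWN q b gamma delta eps lam w <-> A *m (w - wN) = 0.
Proof.
case: wN_normal => _; rewrite /inWN mulmxBr => ->.
by split=> [-> | /eqP]; rewrite ?subrr // subr_eq0 => /eqP.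
Qed.

End CanonicalForm.

Lemma Hmat_mul_eq0 (R : realFieldType) q (b : bool) (gamma : nat -> R) (lam : R)
    (v : 'cV[R]_(b + q)) :
  Hmat q b gamma lam *m v = 0 <-> (1%:M - lam *: Delta q b gamma) *m v = 0.
Proof.
rewrite /Hmat -scalemxAl; split=> [/eqP | ->]; last by rewrite scaler0.
by rewrite scalemx_eq0 pnatr_eq0 => /eqP.
Qed.

Theorem lemma8p1 (R : realFieldType) (q : nat) (b : bool)
  (gamma delta : nat -> R) (kstar eps : R)
  (hq : (1 <= q)%N)
  (hgdec : forall i j : nat, (1 <= i)%N -> (i < j)%N -> (j <= q)%N -> gamma j < gamma i)
  (hgnz : forall i : nat, (1 <= i)%N -> (i <= q)%N -> gamma i != 0)
  (hg1 : 0 < gamma 1)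
  (hdelta : forall i : nat, (1 <= i)%N -> (i <= q)%N -> 0 <= delta i)
  (heps : 0 <= eps)
  (hb : b = (0 < eps))
  (hWne : exists w : 'cV[R]_(b + q), inW q b gamma kstar eps w)
  (lam : R) (hlam : inLambda q gamma lam) :
  forall wN : 'cV[R]_(b + q), inWlam q b gamma delta kstar eps lam wN ->
    is_inf_value q b gamma delta kstar eps (Lstar q b delta wN) /\
    (forall w, inWhat q b gamma delta kstar eps w <->
       (inW q b gamma kstar eps w /\ Hmat q b gamma lam *m (w - wN) = 0)) /\
    (forall w, inWhat q b gamma delta kstar eps w <->
       inWlam q b gamma delta kstar eps lam w) /\
    (inLambda_int q gamma lam ->
       inWhat q b gamma delta kstar eps wN /\
       forall w, inWhat q b gamma delta kstar eps w -> w = wN).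
Proof.
move=> wN wN_normal.
have [wN_feas wN_min] := minimiser_wN hgdec hgnz hg1 hlam wN_normal.
have whatE := minimiserE hgdec hgnz hg1 hlam wN_normal.
split; first by split=> [w /wN_min | m lb]; last exact: lb.
split; first by move=> w; rewrite whatE Hmat_mul_eq0.
split; first by move=> w; rewrite whatE -(normal_eqE wN_normal).
move=> hint; split=> // w /whatE[_]; rewrite DeltaE => /mul_shifted_diag_inj diff0.
apply/eqP; rewrite -subr_eq0 diff0 // => i.
by rewrite gt_eqF // (Delta_weight_gt0 hgdec hgnz hg1 hint).
Qed.
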